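(* Let $q\geqslant 3$ be a power of the prime $p$, let $r\in\mathbb{Z}_{\geqslant 1}$ and $\alpha\in\mathbb{F}_{q^r}$. If $\mathrm{Tr}_{\mathbb{F}_{q^r}/\mathbb{F}_q}(\alpha)\neq 0$, then, with $\beta=(\mathrm{Tr}_{\mathbb{F}_{q^r}/\mathbb{F}_q}(\alpha))^{p-1}$, there exist distinct $\gamma_1,\ldots,\gamma_{q/p}\in\mathbb{F}_{q^r}^{\times}$ such that $$T^q-T-\alpha=(T^p-\beta T-\gamma_1)(T^p-\beta T-\gamma_2)\cdots(T^p-\beta T-\gamma_{q/p})$$ in $\mathbb{F}_{q^r}[T]$. If $\mathrm{Tr}_{\mathbb{F}_{q^r}/\mathbb{F}_q}(\alpha)=0$, then $T^q-T-\alpha$ splits completely into linear factors in $\mathbb{F}_{q^r}[T]$.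
   Context: $\mathrm{Tr}_{\mathbb{F}_{q^r}/\mathbb{F}_q}$ denotes the field trace, $T$ an indeterminate. *)

From HB Require Import structures.
From mathcomp Require Import all_boot all_order all_algebra all_field.
Set Implicit Arguments. Unset Strict Implicit. Unset Printing Implicit Defensive.
Import GRing.Theory.
Local Open Scope ring_scope.

(* Trace of the finite field extension F_{q^r} / F_q, where F_q is the
   subfield {x | x^q = x} of L (with #|L| = q^r):
   Tr(a) = a + a^q + a^(q^2) + ... + a^(q^(r-1)). *)
Definition ffTrace (L : finFieldType) (q r : nat) (a : L) : L :=
  \sum_(i < r) a ^+ (q ^ i).

(* Write t = Tr(alpha), AS(x) = x^p - x and S(y) = y + y^p + ... + y^(q/p),
   so that S (AS x) = AS (S x) = x^q - x.  If t <> 0, put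
   g(x) = x^p - t^(p-1) x = t^p AS(x/t) and psi(v) = t S(t^-p v); as t^q = t,
   both psi o g and g o psi are x |-> x^q - x.  Hence T^q - T - alpha is
   (Psi - alpha) o g for the linearized polynomial Psi of psi, and it remains
   to see that Psi - alpha, of degree q/p, has q/p distinct roots in F_{q^r}.
   This is a count: psi maps F_{q^r} into the zeros of g o Tr (because
   Tr o g = g o Tr and Tr(x^q - x) = 0), of which there are at most
   p q^(r-1), while every fibre of psi has at most q/p points; since
   q^r = p q^(r-1) * q/p, all fibres over these zeros, alpha's included, are
   full.  If t = 0 the same count for x |-> x^q - x, whose image lies in the
   kernel of Tr, shows that T^q - T - alpha has q roots. *)

From HB Require Import structures.
From mathcomp Require Import all_boot all_algebra finfield.
Import GRing.Theory.
Set Implicit Arguments.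
Unset Strict Implicit.
Unset Printing Implicit Defensive.

Local Open Scope ring_scope.

Lemma card_fiber_eq (T T' : finType) (f : T -> T') (B : {set T'}) (m : nat) :
    (forall x, f x \in B) -> (forall b, #|[set x | f x == b]| <= m)%N ->
    (#|B| * m <= #|T|)%N ->
  {in B, forall b, #|[set x | f x == b]| = m}.
Proof.
move=> fB fiber_le cardT b Bb.
have cardT_sum : #|T| = (\sum_(c in B) #|[set x | f x == c]|)%N.
  rewrite -sum1_card (partition_big f (mem B)) //=; apply: eq_bigr => c _.
  by rewrite -sum1_card; apply: eq_bigl => x; rewrite inE.
have /geq_leqif := leqif_sum (fun c (_ : c \in B) => leqif_eq (fiber_le c)).
by rewrite sum_nat_const -cardT_sum cardT => /esym/forall_inP/(_ b Bb)/eqP.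
Qed.

Lemma card_roots_lt_size (R : finIdomainType) (P : {poly R}) :
  P != 0 -> (#|[set x | root P x]| < size P)%N.
Proof.
move=> nzP; rewrite cardE max_poly_roots ?enum_uniq //.
by apply/allP => x; rewrite mem_enum inE.
Qed.

Lemma monic_split_of_fibers (F : finFieldType) (Phi P : {poly F}) (a : F) :
    Phi \is monic -> (1 < size Phi)%N ->
    (forall x, root P Phi.[x]) -> ((size P).-1 * (size Phi).-1)%N = #|F| ->
    root P a ->
  exists2 s : seq F, uniq s /\ size s = (size Phi).-1 &
    Phi - a%:P = \prod_(z <- s) ('X - z%:P).
Proof.
move=> monPhi sPhi rootPPhi cardF Pa.
have nzP : P != 0.
  apply: contra_eqN cardF => /eqP->; rewrite size_poly0 eq_sym -lt0n.
  by apply/card_gt0P; exists 0.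
have sPhiB (b : F) : size (Phi - b%:P) = size Phi.
  by rewrite size_polyDl // size_polyN (leq_ltn_trans (size_polyC_leq1 b)).
have fiberE (b : F) : [set x | Phi.[x] == b] = [set x | root (Phi - b%:P) x].
  by apply/setP => x; rewrite !inE rootE !hornerE subr_eq0.
have fiber_le (b : F) : (#|[set x | Phi.[x] == b]| <= (size Phi).-1)%N.
  rewrite fiberE -ltnS (ltn_predK sPhi) -(sPhiB b) card_roots_lt_size //.
  by rewrite -size_poly_eq0 sPhiB -lt0n ltnW.
have cardB : (#|[set x | root P x]| * (size Phi).-1 <= #|F|)%N.
  rewrite -cardF leq_mul2r -ltnS.
  by rewrite (ltn_predK (card_roots_lt_size nzP)) card_roots_lt_size ?orbT.
have cardRa : #|[set x | Phi.[x] == a]| = (size Phi).-1.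
  have fB x : Phi.[x] \in [set y | root P y] by rewrite inE.
  by apply: (card_fiber_eq fB fiber_le cardB); rewrite inE.
exists (enum [set x | Phi.[x] == a]); first by rewrite enum_uniq -cardE cardRa.
have leadPa : lead_coef (Phi - a%:P) = 1.
  rewrite lead_coefDl ?(monicP monPhi) //.
  by rewrite size_polyN (leq_ltn_trans (size_polyC_leq1 a)).
rewrite [LHS](all_roots_prod_XsubC (rs := enum [set x | Phi.[x] == a])).
- by rewrite leadPa scale1r.
- by rewrite sPhiB -cardE cardRa (ltn_predK sPhi).
- by apply/allP => x; rewrite mem_enum fiberE inE.
- by rewrite uniq_rootsE enum_uniq.
Qed.

Lemma size_Xnsub (R : nzRingType) n (P : {poly R}) :
  (size P <= n)%N -> size ('X^n - P) = n.+1.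
Proof. by move=> sP; rewrite size_polyDl size_polyXn // size_polyN. Qed.

Lemma monicXnsub (R : nzRingType) n (P : {poly R}) :
  (size P <= n)%N -> 'X^n - P \is monic.
Proof.
by move=> sP; rewrite monicE lead_coefDl ?lead_coefXn // size_polyXn size_polyN.
Qed.

(* [ffTrace] over an arbitrary semiring, so that it also applies to {poly L}. *)
Definition frob_trace (R : pzSemiRingType) (n r : nat) (x : R) : R :=
  \sum_(i < r) x ^+ (n ^ i).

Lemma rmorph_frob_trace (R S : pzSemiRingType) (f : {rmorphism R -> S}) n r x :
  f (frob_trace n r x) = frob_trace n r (f x).
Proof. by rewrite rmorph_sum; apply: eq_bigr => i _; rewrite rmorphXn. Qed.

Section FrobeniusTrace.

Variable R : comNzRingType.
Implicit Types (x y c : R) (m n r : nat).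

Lemma exprBn_pchar x y m : [pchar R].-nat m -> (x - y) ^+ m = x ^+ m - y ^+ m.
Proof. by move=> m_pchar; rewrite exprDn_pchar // exprNn_pchar. Qed.

Lemma sum_exprn_pchar I (s : seq I) (P : pred I) (F : I -> R) m :
    [pchar R].-nat m ->
  (\sum_(i <- s | P i) F i) ^+ m = \sum_(i <- s | P i) F i ^+ m.
Proof.
move=> m_pchar; have m_gt0 : (0 < m)%N by case/andP: m_pchar.
apply: (big_morph (fun x : R => x ^+ m)) => [x y|]; first exact: exprDn_pchar.
by rewrite expr0n gtn_eqF.
Qed.

Lemma frob_trace0 n r : (0 < n)%N -> frob_trace n r (0 : R) = 0.
Proof.
by move=> n_gt0; rewrite /frob_trace big1 // => i _; rewrite expr0n expn_eq0 gtn_eqF.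
Qed.

Lemma frob_traceB n r x y : [pchar R].-nat n ->
  frob_trace n r (x - y) = frob_trace n r x - frob_trace n r y.
Proof.
move=> n_pchar; rewrite /frob_trace -sumrB; apply: eq_bigr => i _.
by rewrite exprBn_pchar // pnatX n_pchar.
Qed.

Lemma frob_traceZ n r c x : c ^+ n = c ->
  frob_trace n r (c * x) = c * frob_trace n r x.
Proof.
move=> cn; rewrite /frob_trace mulr_sumr; apply: eq_bigr => i _.
rewrite exprMn; congr (_ * _).
by elim: (nat_of_ord i) => [|j IHj]; rewrite ?expn0 ?expr1 // expnSr exprM IHj.
Qed.

Lemma frob_trace_exp n r m x : [pchar R].-nat m ->
  frob_trace n r x ^+ m = frob_trace n r (x ^+ m).
Proof.
move=> m_pchar; rewrite /frob_trace sum_exprn_pchar //.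
by apply: eq_bigr => i _; rewrite -!exprM mulnC.
Qed.

Lemma frob_trace_telescope n r x :
  frob_trace n r (x ^+ n) - frob_trace n r x = x ^+ (n ^ r) - x.
Proof.
rewrite /frob_trace -sumrB; under eq_bigr do rewrite -exprM -expnS.
rewrite -(big_mkord xpredT (fun i => x ^+ (n ^ i.+1) - x ^+ (n ^ i))).
by rewrite telescope_sumr // expn0 expr1.
Qed.

Lemma frob_trace_AS n r x : [pchar R].-nat n ->
  frob_trace n r (x ^+ n - x) = x ^+ (n ^ r) - x.
Proof. by move=> n_pchar; rewrite frob_traceB // frob_trace_telescope. Qed.

Lemma AS_frob_trace n r x : [pchar R].-nat n ->
  frob_trace n r x ^+ n - frob_trace n r x = x ^+ (n ^ r) - x.
Proof. by move=> n_pchar; rewrite frob_trace_exp // frob_trace_telescope. Qed.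

End FrobeniusTrace.

(* For t in F_q^*, [twisted_AS p t x = t^p AS(x/t)] and
   [twisted_trace p k t t^-1 v = t S(v/t^p)], S the trace of F_q/F_p. *)
Definition twisted_AS (R : pzRingType) (p : nat) (t x : R) : R :=
  x ^+ p - t ^+ p.-1 * x.

Definition twisted_trace (R : pzSemiRingType) (p k : nat) (t u v : R) : R :=
  t * frob_trace p k (u ^+ p * v).

Lemma rmorph_twisted_trace (R S : pzSemiRingType) (f : {rmorphism R -> S})
    p k t u v :
  f (twisted_trace p k t u v) = twisted_trace p k (f t) (f u) (f v).
Proof. by rewrite rmorphM rmorph_frob_trace rmorphM rmorphXn. Qed.

Section TwistedArtinSchreier.

Variables (R : comNzRingType) (p k : nat) (t u : R).
Hypotheses (pcharRp : p \in [pchar R]) (tu1 : t * u = 1) (uq : u ^+ (p ^ k) = u).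

Let p_gt0 : (0 < p)%N := prime_gt0 (pcharf_prime pcharRp).
Let p_pchar : [pchar R].-nat p. Proof. by rewrite pnatE ?(pcharf_prime pcharRp). Qed.

Lemma twisted_trace_AS x :
  twisted_trace p k t u (twisted_AS p t x) = x ^+ (p ^ k) - x.
Proof.
have upt : u ^+ p * t ^+ p.-1 = u.
  by rewrite -{1}(prednK p_gt0) exprS -mulrA -exprMn (mulrC u t) tu1 expr1n mulr1.
rewrite /twisted_trace /twisted_AS mulrBr mulrA upt -exprMn frob_trace_AS //.
by rewrite exprMn uq -mulrBr mulrA tu1 mul1r.
Qed.

Lemma twisted_AS_trace v :
  twisted_AS p t (twisted_trace p k t u v) = v ^+ (p ^ k) - v.
Proof.
have upq : (u ^+ p) ^+ (p ^ k) = u ^+ p by rewrite exprAC uq.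
rewrite /twisted_AS /twisted_trace; set s := frob_trace p k _.
rewrite mulrA -exprSr prednK // exprMn -mulrBr /s AS_frob_trace //.
by rewrite exprMn upq -mulrBr mulrA -exprMn tu1 expr1n mul1r.
Qed.

End TwistedArtinSchreier.

Section FiniteField.

Variables (L : finFieldType) (p k r : nat).
Hypotheses (pcharLp : p \in [pchar L]) (k_gt0 : (0 < k)%N) (r_gt0 : (0 < r)%N).
Hypothesis cardL : #|L| = ((p ^ k) ^ r)%N.

Local Notation q := (p ^ k)%N.
Local Notation Tr := (frob_trace q r : L -> L).
Local Notation TrP := (frob_trace q r ('X : {poly L})).

Let p_prime : prime p := pcharf_prime pcharLp.
Let q_gt1 : (1 < q)%N := leq_ltn_trans k_gt0 (ltn_expl k (prime_gt1 p_prime)).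
Let q_pchar : [pchar L].-nat q. Proof. by rewrite pnatX pnatE ?pcharLp. Qed.
Let q_pchar_poly : [pchar {poly L}].-nat q.
Proof. by rewrite (eq_pnat _ (@pchar_poly L)). Qed.
Let qE : q = (p ^ k.-1 * p)%N. Proof. by rewrite -expnSr prednK. Qed.

Lemma frob_trace_fixed x : Tr x ^+ q = Tr x.
Proof. by apply/eqP; rewrite -subr_eq0 AS_frob_trace // -cardL expf_card subrr. Qed.

Lemma frob_trace_AS_eq0 x : Tr (x ^+ q - x) = 0.
Proof. by rewrite frob_trace_AS // -cardL expf_card subrr. Qed.

Lemma horner_trace_poly x : TrP.[x] = Tr x.
Proof. by rewrite -horner_evalE rmorph_frob_trace /= horner_evalE hornerX. Qed.

Lemma size_trace_poly : ((size TrP).-1 * q)%N = #|L|.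
Proof.
have sX n : (1 < n)%N -> (size ('X : {poly L}) <= n)%N by rewrite size_polyX.
have := size_comp_poly TrP ('X^q - 'X).
rewrite (rmorph_frob_trace (comp_poly _)) /= comp_polyX frob_trace_AS //.
rewrite !size_Xnsub ?sX //= => [<-|]; first exact: esym cardL.
exact: leq_trans q_gt1 (leq_pexp2l (ltnW q_gt1) r_gt0).
Qed.

Lemma split_of_trace_eq0 a : Tr a = 0 ->
  exists s : seq L, 'X^q - 'X - a%:P = \prod_(x <- s) ('X - x%:P).
Proof.
move=> Tra0; have sX : (size ('X : {poly L}) <= q)%N by rewrite size_polyX.
have sXq : (1 < size ('X^q - 'X : {poly L})%R)%N.
  by rewrite size_Xnsub // ltnS (ltnW q_gt1).
have TrP_AS x : root TrP ('X^q - 'X).[x].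
  by rewrite rootE !hornerE horner_trace_poly frob_trace_AS_eq0.
have count : ((size TrP).-1 * (size ('X^q - 'X : {poly L})%R).-1)%N = #|L|.
  by rewrite size_Xnsub // size_trace_poly.
have TrPa : root TrP a by rewrite rootE horner_trace_poly Tra0.
have [s _ ->] := monic_split_of_fibers (monicXnsub sX) sXq TrP_AS count TrPa.
by exists s.
Qed.

Section TraceNeq0.

Variable a : L.
Hypothesis Tra : Tr a != 0.

Local Notation t := (Tr a).
Local Notation G := ('X^p - t ^+ p.-1 *: 'X : {poly L}).
Local Notation Psi := (twisted_trace p k t%:P t^-1%:P 'X).

Let sG : (size (t ^+ p.-1 *: 'X : {poly L}) <= p)%N.
Proof. by rewrite (leq_trans (size_scale_leq _ _)) // size_polyX prime_gt1. Qed.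
Let size_G : size G = p.+1 := size_Xnsub sG.

Lemma horner_Psi x : Psi.[x] = twisted_trace p k t t^-1 x.
Proof.
by rewrite -horner_evalE rmorph_twisted_trace /= !horner_evalE !hornerC hornerX.
Qed.

Lemma Psi_comp : Psi \Po G = 'X^q - 'X.
Proof.
have pcharLp_poly : p \in [pchar {poly L}] by rewrite pchar_poly.
have tu1 : t%:P * t^-1%:P = 1 by rewrite -polyCM mulfV.
have uq : t^-1%:P ^+ q = t^-1%:P by rewrite -polyC_exp exprVn frob_trace_fixed.
have -> : G = twisted_AS p t%:P 'X by rewrite /twisted_AS -polyC_exp mul_polyC.
rewrite (rmorph_twisted_trace (comp_poly _)) /= !comp_polyC comp_polyX.
exact: twisted_trace_AS.
Qed.

Lemma size_Psi : (size Psi).-1 = (p ^ k.-1)%N.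
Proof.
have := size_comp_poly Psi G; rewrite Psi_comp size_G size_Xnsub ?size_polyX //=.
by rewrite qE => /eqP; rewrite eqn_pmul2r ?prime_gt0 // => /eqP.
Qed.

Lemma monic_Psi : Psi \is monic.
Proof.
have sG_gt1 : (1 < size G)%N by rewrite size_G ltnS prime_gt0.
apply/monicP; have := lead_coef_comp Psi sG_gt1.
by rewrite Psi_comp !(monicP (monicXnsub _)) ?size_polyX // expr1n mulr1.
Qed.

Lemma root_trace_Psi x : root (G \Po TrP) Psi.[x].
Proof.
have p_pchar : [pchar L].-nat p by rewrite pnatE.
have beta_fixed : (t ^+ p.-1) ^+ q = t ^+ p.-1 by rewrite exprAC frob_trace_fixed.
rewrite rootE horner_comp horner_Psi horner_trace_poly !hornerE.
rewrite (frob_trace_exp _ _ _ p_pchar) -(frob_traceZ _ _ beta_fixed) -frob_traceB //.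
rewrite -[X in frob_trace q r X]/(twisted_AS p t _) twisted_AS_trace //.
- by rewrite frob_trace_AS_eq0.
- by rewrite mulfV.
- by rewrite exprVn frob_trace_fixed.
Qed.

Lemma split_Psi : exists2 s : seq L, uniq s /\ size s = (p ^ k.-1)%N &
  Psi - a%:P = \prod_(z <- s) ('X - z%:P).
Proof.
have sPsi : (1 < size Psi)%N by rewrite -ltn_predRL size_Psi expn_gt0 prime_gt0.
have count : ((size (G \Po TrP)).-1 * (size Psi).-1)%N = #|L|.
  rewrite size_comp_poly size_G size_Psi /= mulnAC -expnS prednK //.
  by rewrite mulnC size_trace_poly.
have root_t : root (G \Po TrP) a.
  rewrite rootE horner_comp horner_trace_poly !hornerE.
  by rewrite -exprSr prednK ?prime_gt0 ?subrr.
have [s [s_uniq s_size] ->] :=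
  monic_split_of_fibers monic_Psi sPsi root_trace_Psi count root_t.
by exists s; rewrite // s_size size_Psi.
Qed.

Lemma factor_of_trace_neq0 :
  exists gamma : 'I_(q %/ p) -> L,
    injective gamma /\ (forall i, gamma i != 0) /\
    'X^q - 'X - a%:P = \prod_(i < q %/ p) ('X^p - t ^+ p.-1 *: 'X - (gamma i)%:P).
Proof.
have [s [s_uniq s_size] Psi_a] := split_Psi.
have qp : (q %/ p)%N = size s.
  by rewrite s_size qE mulnK ?prime_gt0.
have Psi0 : Psi.[0] = 0.
  by rewrite horner_Psi /twisted_trace mulr0 frob_trace0 ?mulr0 ?prime_gt0.
have a_neq0 : a != 0 by apply: contra_neq Tra => ->; rewrite frob_trace0 // ltnW.
rewrite qp; exists (fun i : 'I_(size s) => nth 0 s i); split; [|split].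
- by move=> i j /eqP; rewrite nth_uniq // => /eqP /val_inj.
- move=> i; apply: contra_neq a_neq0 => gamma0.
  have : root (Psi - a%:P) (nth 0 s i) by rewrite Psi_a root_prod_XsubC mem_nth.
  by rewrite gamma0 rootE hornerD Psi0 hornerN hornerC sub0r oppr_eq0 => /eqP.
- rewrite -Psi_comp -(comp_polyC a G) -comp_polyB Psi_a rmorph_prod.
  rewrite (big_nth 0) big_mkord; apply: eq_bigr => i _.
  by rewrite /= comp_polyB comp_polyX comp_polyC.
Qed.

End TraceNeq0.

End FiniteField.

Theorem theorem2p2 (L : finFieldType) (p k q r : nat)
  (Hp : prime p) (HpL : p \in [pchar L]) (Hk : (0 < k)%N) (Hq : q = (p ^ k)%N)
  (Hq3 : (3 <= q)%N) (Hr : (1 <= r)%N) (HL : #|L| = (q ^ r)%N) (alpha : L) :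
  (ffTrace q r alpha != 0 ->
     let beta := ffTrace q r alpha ^+ p.-1 in
     exists gamma : 'I_(q %/ p) -> L,
       injective gamma /\ (forall i, gamma i != 0) /\
       'X^q - 'X - alpha%:P =
         \prod_(i < q %/ p) ('X^p - beta *: 'X - (gamma i)%:P))
  /\
  (ffTrace q r alpha = 0 ->
     exists s : seq L, 'X^q - 'X - alpha%:P = \prod_(x <- s) ('X - x%:P)).
Proof.
subst q; split => [Tr_neq0 beta | Tr_eq0].
  exact: factor_of_trace_neq0 HpL Hk Hr HL alpha Tr_neq0.
exact: split_of_trace_eq0 HpL Hk Hr HL alpha Tr_eq0.
Qed.
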